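(* Let $n \ge 1$, $1 \le i \le n+1$ and $k \ge 0$ be integers. The number of rooted trees on the vertex set $[n+1]=\{1,\ldots,n+1\}$ whose root is $i$ and in which exactly $k$ children of the root are smaller than $i$ equals (as an identity of rational numbers) $$\binom{i-1}{k}\,\big[(k+1)(n+1)-i\big]\,n^{\,i-k-2}\,(n+1)^{\,n-i}.$$
   Context: A rooted tree on a vertex set $V$ is a tree with vertex set $V$ together with a distinguished vertex (the root); the children of the root are the vertices adjacent to it. Vertices are compared by their integer labels. Exponents may be negative, in which case the powers are interpreted as rational numbers. *)

From mathcomp Require Import all_boot all_order all_algebra.
Set Implicit Arguments. Unset Strict Implicit. Unset Printing Implicit Defensive.
Import Order.TTheory GRing.Theory Num.Theory.

(* Vertex set [N] = {1,...,N} is represented by 'I_N : the ordinal v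
   stands for the label (val v).+1; label order = ordinal order. *)

Definition simple_graph N (E : {set {set 'I_N}}) : bool :=
  [forall e in E, #|e| == 2].

Definition adj N (E : {set {set 'I_N}}) : rel 'I_N :=
  fun x y => (x != y) && ([set x; y] \in E).

Definition connectedb N (E : {set {set 'I_N}}) : bool :=
  [forall x, forall y, connect (adj E) x y].

(* E contains a cycle: a closed walk through m >= 3 pairwise distinct
   vertices (any such cycle has m <= N). *)
Definition has_cycle N (E : {set {set 'I_N}}) : bool :=
  [exists m : 'I_N.+1, exists c : m.-tuple 'I_N,
     [&& 2 < m, uniq c & cycle (adj E) c]].

Definition is_tree N (E : {set {set 'I_N}}) : bool :=
  [&& simple_graph E, connectedb E & ~~ has_cycle E].

Definition small_children N (E : {set {set 'I_N}}) (r : 'I_N) : nat :=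
  #|[set v | adj E r v & v < r]|.

(* A tree on 'I_N rooted at r is the same as its parent map p: p fixes r and
   every vertex flows to r under iteration of p; the children of r form the
   fibre of p over r.  More generally, parent maps on W flowing into a disjoint
   root set U (rooted forests on U :|: W with roots U) number u (u + w)^(w - 1):
   once the children S of a root x are fixed, what remains is a forest on
   W :\: S with roots U :\ x :|: S, and summing over S is an Abel-type binomial
   identity.  On n + 1 vertices, a tree whose root r has exactly k children
   below r is then a choice of those k among the r smaller labels, of t
   children among the n - r larger ones, and of a forest with these k + t
   roots, so that there are C(r, k) * sum_t C(n - r, t) (k + t) n^(n-k-t-1)
   of them; the binomial theorem and its derivative evaluate this sum. *)

From mathcomp Require Import all_boot all_order all_algebra.
From mathcomp Require Import zify ring.
Set Implicit Arguments. Unset Strict Implicit. Unset Printing Implicit Defensive.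
Import Order.TTheory GRing.Theory Num.Theory.

Lemma sum_bin_expn a x : \sum_(j < a.+1) 'C(a, j) * x ^ (a - j) = (x + 1) ^ a.
Proof. by rewrite expnDn; apply: eq_bigr => j _; rewrite exp1n muln1. Qed.

Lemma sum_mul_bin_expn a x :
  \sum_(j < a.+1) j * 'C(a, j) * x ^ (a - j) = a * (x + 1) ^ a.-1.
Proof.
case: a => [|a]; first by rewrite big_ord_recl big_ord0.
rewrite big_ord_recl /= mul0n add0n -sum_bin_expn big_distrr /=.
by apply: eq_bigr => j _; rewrite /bump /= add1n -mul_bin_diag /= subSS mulnA.
Qed.

Lemma sum_bin_shift a k x :
  \sum_(t < a.+1) 'C(a, t) * ((k + t) * x ^ (a - t)) =
  k * (x + 1) ^ a + a * (x + 1) ^ a.-1.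
Proof.
rewrite -sum_bin_expn -sum_mul_bin_expn big_distrr -big_split /=.
by apply: eq_bigr => t _; lia.
Qed.

(* Rooted forests on [u + w] labelled vertices with [u] prescribed roots. *)
Definition forest_number u w := if w == 0 then 1 else u * (u + w) ^ w.-1.

Lemma forest_numberM s m : s <= m -> 0 < m ->
  forest_number s (m - s) * m = s * m ^ (m - s).
Proof.
rewrite /forest_number => sm m0; case: eqP => [ms|/eqP ms].
  by rewrite ms expn0 mul1n muln1; lia.
by rewrite subnKC // -mulnA -expnSr prednK // lt0n.
Qed.

Lemma forest_number_rec u w : 0 < u -> 0 < w ->
  \sum_(t < w.+1) 'C(w, t) * forest_number (u.-1 + t) (w - t) = forest_number u w.
Proof.
move=> u0 w0; set x := u.-1 + w.
have x0 : 0 < x by rewrite /x; lia.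
apply/eqP; rewrite -(eqn_pmul2r x0); apply/eqP.
have termM (t : 'I_w.+1) :
    'C(w, t) * forest_number (u.-1 + t) (w - t) * x = 'C(w, t) * ((u.-1 + t) * x ^ (w - t)).
  have xt : w - t = x - (u.-1 + t) by rewrite /x; have := ltn_ord t; lia.
  by rewrite -mulnA xt forest_numberM // /x; have := ltn_ord t; lia.
rewrite big_distrl (eq_bigr _ (fun t _ => termM t)) sum_bin_shift /forest_number.
have -> : x + 1 = u + w by rewrite /x; lia.
have -> : (u + w) ^ w = (u + w) * (u + w) ^ w.-1 by rewrite -expnS prednK.
rewrite (negbTE (lt0n_neq0 w0)) /x; set y := (u + w) ^ w.-1; nia.
Qed.

Lemma sum_powerset_card (T : finType) (W : {set T}) (h : nat -> nat) :
  \sum_(S in powerset W) h #|S| = \sum_(t < #|W|.+1) 'C(#|W|, t) * h t.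
Proof.
have cardS S : S \in powerset W -> #|S| < #|W|.+1.
  by rewrite powersetE ltnS; apply: subset_leq_card.
rewrite (partition_big (fun S : {set T} => inord #|S| : 'I_#|W|.+1) xpredT) //=.
apply: eq_bigr => t _; rewrite -cards_draws -sum_nat_const.
apply: eq_big => [S|S /andP[/cardS SW /eqP <-]]; last by rewrite inordK.
rewrite !inE -powersetE; apply: andb_id2l => /cardS SW.
by rewrite -(inj_eq val_inj) /= inordK.
Qed.

Lemma sum_powersetU (T : finType) (L H : {set T}) (G : {set T} -> nat) :
  [disjoint L & H] ->
  \sum_(S in powerset (L :|: H)) G S =
  \sum_(A in powerset L) \sum_(B in powerset H) G (A :|: B).
Proof.
move=> dLH; rewrite (partition_big (fun S => S :&: L) (mem (powerset L))) /=; last first.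
  by move=> S _; rewrite powersetE subsetIr.
apply: eq_bigr => A; rewrite powersetE => AL.
have BL (B : {set T}) : B \subset H -> B :&: L = set0.
  by move=> BH; apply/disjoint_setI0; rewrite disjoint_sym (disjointWr BH).
rewrite (reindex_onto (fun B => A :|: B) (fun S => S :&: H)) /=; last first.
  move=> S /andP[]; rewrite powersetE => SLH /eqP <-.
  by rewrite -setIUr (setIidPl SLH).
apply: eq_bigl => B; rewrite !powersetE; apply/andP/idP => [[_ /eqP <-]|BH].
  exact: subsetIr.
split; first by rewrite setUSS // setIUl (setIidPl AL) BL // setU0 eqxx.
by rewrite setIUl (setIidPl BH) (disjoint_setI0 (disjointWl AL dLH)) set0U eqxx.
Qed.

Lemma sum_powersetU_meet (T : finType) (L H : {set T}) k (h : nat -> nat) :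
  [disjoint L & H] ->
  \sum_(S in powerset (L :|: H) | #|S :&: L| == k) h #|S| =
  'C(#|L|, k) * \sum_(t < #|H|.+1) 'C(#|H|, t) * h (k + t).
Proof.
move=> dLH; have dHL : [disjoint H & L] by rewrite disjoint_sym.
have splitE (A B : {set T}) : A \subset L -> B \subset H ->
    (A :|: B) :&: L = A /\ #|A :|: B| = #|A| + #|B|.
  move=> AL BH; have /disjoint_setI0 AB0 := disjointW AL BH dLH.
  rewrite cardsU AB0 cards0 subn0 setIUl (setIidPl AL).
  by rewrite (disjoint_setI0 (disjointWl BH dHL)) setU0.
rewrite big_mkcondr sum_powersetU //.
transitivity (\sum_(A in powerset L | #|A| == k) \sum_(B in powerset H) h (k + #|B|)).
  rewrite big_mkcondr; apply: eq_bigr => A; rewrite powersetE => AL.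
  case: eqP => [<-|nk].
    by apply: eq_bigr => B; rewrite powersetE => /(splitE A B AL)[-> ->]; rewrite eqxx.
  by apply: big1 => B; rewrite powersetE => /(splitE A B AL)[-> _]; case: eqP.
rewrite (eq_bigl (mem [set A : {set T} | A \subset L & #|A| == k])); last first.
  by move=> A; rewrite !inE.
by rewrite sum_nat_const cards_draws (sum_powerset_card H (fun t => h (k + t))).
Qed.

Section ForestMaps.
Variable T : finType.
Implicit Types (A B U W S : {set T}) (p q : {ffun T -> T}).

Definition reaches (f : T -> T) U w := [exists u in U, fconnect f w u].

Lemma reachesP (f : T -> T) U w :
  reflect (exists n, iter n f w \in U) (reaches f U w).
Proof.
apply: (iffP existsP) => [[u /andP[uU /iter_findex fu]]|[n nU]].
  by exists (findex f w u); rewrite fu.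
by exists (iter n f w); rewrite nU fconnect_iter.
Qed.

Lemma reach_agree_off (f g : T -> T) A B w n :
  (forall v, v \notin A -> g v = f v) -> iter n f w \in B ->
  exists m, iter m g w \in A :|: B.
Proof.
move=> gf; elim: n w => [|n IH] w wB; first by exists 0; rewrite inE wB orbT.
have [wA|wA] := boolP (w \in A); first by exists 0; rewrite inE wA.
by rewrite iterSr in wB; have [m] := IH (f w) wB; exists m.+1; rewrite iterSr gf.
Qed.

Lemma iter_exit (f : T -> T) U W w n : [disjoint U & W] ->
  (forall v, v \in W -> f v \in U :|: W) -> w \in W -> iter n f w \in U ->
  exists m, iter m f w \in W /\ f (iter m f w) \in U.
Proof.
move=> dUW fW; elim: n w => [|n IH] w wW; first by rewrite /= (disjointFl dUW wW).
rewrite iterSr; case/setUP: (fW w wW) => [fwU _|/IH IHfw /IHfw[m]].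
  by exists 0.
by exists m.+1; rewrite iterSr.
Qed.

(* [p] is the parent map of a rooted forest on [U :|: W] with root set [U]. *)
Definition forest_map U W p :=
  [forall v, (v \notin W) ==> (p v == v)] &&
  [forall w in W, (p w \in U :|: W) && reaches p U w].

Definition forest_maps U W := [set p | forest_map U W p].

Lemma forest_mapsP U W p : reflect
  [/\ forall v, v \notin W -> p v = v,
      forall w, w \in W -> p w \in U :|: W &
      forall w, w \in W -> exists n, iter n p w \in U] (p \in forest_maps U W).
Proof.
rewrite inE; apply: (iffP andP) => [[/forallP fixW /forallP inW]|[fixW inW reachW]].
  split=> [v vW|w wW|w wW]; first exact/eqP/(implyP (fixW v)).
    by case/andP: (implyP (inW w) wW).
  by case/andP: (implyP (inW w) wW) => _ /reachesP.
split; apply/forallP => v; apply/implyP; first by move/fixW ->.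
by move=> vW; rewrite inW //=; apply/reachesP/reachW.
Qed.

Lemma forest_maps0r U : forest_maps U set0 = [set [ffun v => v]].
Proof.
apply/setP => p; rewrite in_set1; apply/forest_mapsP/eqP => [[fixW _ _]|->].
  by apply/ffunP => v; rewrite ffunE fixW ?inE.
by split=> [v|w|w]; rewrite ?ffunE ?inE.
Qed.

Lemma forest_maps0l W : W != set0 -> forest_maps set0 W = set0.
Proof.
case/set0Pn => w wW; apply/setP => p; rewrite in_set0.
by apply/negP => /forest_mapsP[_ _ /(_ w wW)[n]]; rewrite inE.
Qed.

Definition children W p x := [set w in W | p w == x].

Definition prune S p := [ffun v => if v \in S then v else p v].

Definition graft S x q := [ffun v => if v \in S then x else q v].

Lemma graft_prune W p x : graft (children W p x) x (prune (children W p x) p) = p.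
Proof.
apply/ffunP => v; rewrite !ffunE; case: ifPn => [|/negbTE -> //].
by rewrite inE => /andP[_ /eqP ->].
Qed.

Section Cut.
Variables (U W : {set T}) (x : T).
Hypotheses (dUW : [disjoint U & W]) (xU : x \in U).

Lemma prune_forest_map p : p \in forest_maps U W ->
  prune (children W p x) p \in
    forest_maps (U :\ x :|: children W p x) (W :\: children W p x).
Proof.
set S := children W p x; case/forest_mapsP => fixW inW reachW.
have pS w : w \in W -> (w \in S) = (p w == x) by move=> wW; rewrite inE wW.
have reachS w : w \in W -> exists n, iter n p w \in U :\ x :|: S.
  move=> wW; have [n /(iter_exit dUW inW wW)[m [mW pmU]]] := reachW w wW.
  (* the orbit of [w] enters [U] either from a child of [x] or inside [U :\ x] *)
  have [pmx|pmx] := eqVneq (p (iter m p w)) x.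
    by exists m; rewrite in_setU pS // pmx eqxx orbT.
  by exists m.+1; rewrite iterS in_setU in_setD1 pmx pmU.
have pruneE v : v \notin S -> prune S p v = p v by rewrite ffunE => /negbTE ->.
apply/forest_mapsP; split=> [v|w|w]; rewrite ?ffunE in_setD ?negb_and ?negbK.
- by case: ifP => // _ /= /fixW.
- case/andP => /negbTE wS wW; rewrite wS.
  have pwx : p w != x by rewrite -pS ?wS.
  case/setUP: (inW w wW) => pw; rewrite !in_setU in_setD1 in_setD pwx pw ?orbT //= andbT.
  by case: (p w \in S); rewrite ?orbT.
- case/andP => _ /reachS[n pn]; have [m] := reach_agree_off pruneE pn.
  by rewrite setUC -setUA setUid; exists m.
Qed.

Variable S : {set T}.
Hypothesis SW : S \subset W.

Let xW : x \notin W. Proof. by rewrite (disjointFr dUW xU). Qed.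

Lemma graft_forest_map q : q \in forest_maps (U :\ x :|: S) (W :\: S) ->
  graft S x q \in forest_maps U W.
Proof.
case/forest_mapsP => fixWS inWS reachWS.
have graftE v : v \notin S -> graft S x q v = q v by rewrite ffunE => /negbTE ->.
apply/forest_mapsP; split=> [v vW|w wW|w wW].
- have vS : v \notin S by apply: contra vW; apply: (subsetP SW).
  by rewrite graftE // fixWS // in_setD (negbTE vW) andbF.
- case: (boolP (w \in S)) => [wS|wS]; first by rewrite ffunE wS inE xU.
  rewrite graftE //; have := inWS w; rewrite in_setD wS wW => /(_ isT).
  rewrite !in_setU in_setD1 in_setD.
  by case/orP => [/orP[/andP[_ ->]|/(subsetP SW) ->]|/andP[_ ->]]; rewrite ?orbT.
- have [n qn] : exists n, iter n q w \in U :\ x :|: S.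
    case: (boolP (w \in S)) => wS; first by exists 0; rewrite inE wS orbT.
    by apply: reachWS; rewrite in_setD wS.
  have [m] := reach_agree_off graftE qn.
  rewrite setUC -setUA setUid in_setU in_setD1 => /orP[/andP[_ mU]|mS].
    by exists m.
  by exists m.+1; rewrite iterS ffunE mS.
Qed.

Lemma children_graft q : q \in forest_maps (U :\ x :|: S) (W :\: S) ->
  children W (graft S x q) x = S.
Proof.
case/forest_mapsP => _ inWS _; apply/setP => w; rewrite inE ffunE.
case: ifPn => [wS|wS]; first by rewrite eqxx andbT (subsetP SW).
apply/andP => -[wW /eqP qwx]; have := inWS w; rewrite in_setD wS wW qwx => /(_ isT).
have xS : x \notin S by apply: contra xW; apply: (subsetP SW).
by rewrite !in_setU in_setD1 in_setD eqxx (negbTE xS) (negbTE xW) andbF.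
Qed.

Lemma graft_inj : {in forest_maps (U :\ x :|: S) (W :\: S) &, injective (graft S x)}.
Proof.
move=> q1 q2 /forest_mapsP[fix1 _ _] /forest_mapsP[fix2 _ _] /ffunP q12.
apply/ffunP => v; case: (boolP (v \in S)) => vS.
  by rewrite fix1 ?fix2 // in_setD vS.
by have := q12 v; rewrite !ffunE (negbTE vS).
Qed.

Lemma card_forest_maps_children :
  #|[set p in forest_maps U W | children W p x == S]| =
  #|forest_maps (U :\ x :|: S) (W :\: S)|.
Proof.
rewrite -(card_in_imset graft_inj); apply: eq_card => p; rewrite inE.
apply/andP/imsetP => [[pF /eqP pS]|[q qF ->]].
  by exists (prune S p); rewrite -pS ?prune_forest_map ?graft_prune.
by rewrite graft_forest_map ?children_graft.
Qed.

Lemma disjoint_cut : [disjoint U :\ x :|: S & W :\: S].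
Proof.
rewrite disjoint_subset; apply/subsetP => v; rewrite !inE.
by case/orP => [/andP[_ vU]|->]; rewrite ?(disjointFr dUW vU) ?andbF.
Qed.

Lemma card_cut : #|U :\ x :|: S| = #|U|.-1 + #|S|.
Proof.
rewrite cardsU (_ : _ :&: S = set0) ?cards0 ?subn0.
  by rewrite (cardsD1 x U) xU add1n.
apply/setP => v; rewrite !inE; apply/negP => /andP[/andP[_ vU] /(subsetP SW) vW].
by rewrite (disjointFr dUW vU) in vW.
Qed.

End Cut.

Lemma card_forest_maps_by_children U W x (P : pred {set T}) :
  #|[set p in forest_maps U W | P (children W p x)]| =
  \sum_(S in powerset W | P S) #|[set p in forest_maps U W | children W p x == S]|.
Proof.
rewrite -sum1_card (partition_big (children W ^~ x) (fun S => (S \in powerset W) && P S)).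
  apply: eq_bigr => S /andP[_ PS]; rewrite sum1dep_card.
  apply: eq_card => p; rewrite !inE -andbA.
  by case: (eqVneq (children W p x) S) => [->|]; rewrite ?PS ?andbF.
move=> p; rewrite inE => /andP[_ ->]; rewrite andbT powersetE.
by apply/subsetP => w; rewrite inE => /andP[].
Qed.

Lemma card_forest_maps U W :
  [disjoint U & W] -> #|forest_maps U W| = forest_number #|U| #|W|.
Proof.
have [n] := ubnP (#|U| + #|W|); elim: n U W => [|n IH] U W; first by rewrite ltn0.
move=> sizeUW dUW.
have [->|W0] := eqVneq W set0; first by rewrite forest_maps0r cards1 cards0.
have [->|/set0Pn[x xU]] := eqVneq U set0.
  by rewrite forest_maps0l // !cards0 /forest_number cards_eq0 (negbTE W0).
have := card_forest_maps_by_children U W x predT.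
rewrite setIdE setIT => ->.
have U0 : 0 < #|U| by rewrite card_gt0; apply/set0Pn; exists x.
rewrite -forest_number_rec // ?card_gt0 //.
rewrite -(sum_powerset_card W (fun s => forest_number (#|U|.-1 + s) (#|W| - s))).
apply: eq_big => [S|S /andP[]]; first by rewrite andbT.
rewrite powersetE => SW _; have leSW := subset_leq_card SW.
have cardWS : #|W :\: S| = #|W| - #|S| by rewrite cardsD (setIidPr SW).
rewrite card_forest_maps_children // IH ?disjoint_cut // (card_cut dUW xU SW) cardWS //.
lia.
Qed.

End ForestMaps.

Lemma cycle_neighbours (T : eqType) (e : rel T) (c : seq T) x :
  uniq c -> cycle e c -> 2 < size c -> x \in c ->
  exists y z, [/\ y \in c, z \in c, y != z, e x y & e z x].
Proof.
move=> uc cc sc xc; case: (rot_to xc) => i s rot_c.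
have us : uniq (x :: s) by rewrite -rot_c rot_uniq.
have cs : cycle e (x :: s) by rewrite -rot_c rot_cycle.
have ss : size (x :: s) = size c by rewrite -rot_c size_rot.
have sub w : w \in x :: s -> w \in c by rewrite -rot_c mem_rot.
case: s rot_c us cs ss sub => [|y [|z s]] _; try by move=> _ _ /= ss; rewrite -ss in sc.
move=> /and3P[_ yzs _] cs _ sub; exists y, (last z s); split.
- by apply: sub; rewrite !inE eqxx orbT.
- by apply: sub; rewrite (in_cons x) (in_cons y) mem_last !orbT.
- by apply: contraNneq yzs => ->; apply: mem_last.
- by case/andP: cs.
- by move: cs; rewrite /= rcons_path => /and3P[_ _ /andP[]].
Qed.

Lemma connect_parent_map (T : finType) (e : rel T) (r : T) :
  (forall v, connect e v r) ->
  exists p : {ffun T -> T},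
    [/\ p r = r, forall v, v != r -> e v (p v) & forall v, exists n, iter n p v = r].
Proof.
move=> conn; pose walk n v := [exists s : n.-tuple T, path e v s && (last v s == r)].
have ex_walk v : exists n, walk n v.
  have /connectP[s es lr] := conn v.
  by exists (size s); apply/existsP; exists (in_tuple s); rewrite es -lr eqxx.
pose dist v := ex_minn (ex_walk v).
have descent v : v != r -> exists2 u, e v u & dist u < dist v.
  rewrite /dist => vr; case: ex_minnP => d /existsP[[[|u s] /= /eqP <-]].
    by rewrite (negbTE vr).
  case/andP => /andP[vu us] lr _; exists u => //.
  case: ex_minnP => du _; apply; apply/existsP; exists (in_tuple s).
  by rewrite us lr.
pose p := [ffun v => if v == r then r else odflt r [pick u | e v u && (dist u < dist v)]].
have pE v : v != r -> e v (p v) && (dist (p v) < dist v).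
  move=> vr; rewrite ffunE (negbTE vr); case: pickP => [u //|none].
  by have [u vu uv] := descent v vr; have := none u; rewrite vu uv.
exists p; split=> [|v /pE /andP[] //|v]; first by rewrite ffunE eqxx.
have [n] := ubnP (dist v); elim: n v => [|n IH] v; first by rewrite ltn0.
move=> dv; have [->|vr] := eqVneq v r; first by exists 0.
have [_ /leq_trans/(_ dv)/IH[m pm]] := andP (pE v vr).
by exists m.+1; rewrite iterSr.
Qed.

Section RootedTrees.
Variable N : nat.
Implicit Types (p q : {ffun 'I_N -> 'I_N}) (E F : {set {set 'I_N}}) (r v : 'I_N).

Definition rooted r p := p \in forest_maps [set r] [set~ r].

Lemma rootedP r p :
  reflect (p r = r /\ forall v, exists n, iter n p v = r) (rooted r p).
Proof.
apply: (iffP (@forest_mapsP _ [set r] [set~ r] p)) => [[fixW _ reachW]|[pr reach]].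
  split=> [|v]; first by apply: fixW; rewrite !inE negbK.
  have [->|vr] := eqVneq v r; first by exists 0.
  have /reachW[n] : v \in [set~ r] by rewrite !inE.
  by rewrite inE => /eqP; exists n.
split=> [v|w _|w _]; first by rewrite !inE negbK => /eqP ->.
  by rewrite setUCr inE.
by have [n nr] := reach w; exists n; rewrite nr inE.
Qed.

Definition parent_edges p r := [set [set v; p v] | v in [set~ r]].

Lemma adj_sym E : symmetric (adj E).
Proof. by move=> a b; rewrite /adj eq_sym setUC. Qed.

Lemma eq_set2 (T : finType) (a b c d : T) : [set a; b] = [set c; d] ->
  (a = c /\ b = d) \/ (a = d /\ b = c).
Proof.
move=> e; have: a \in [set c; d] by rewrite -e set21.
have: b \in [set c; d] by rewrite -e set22.
have: c \in [set a; b] by rewrite e set21.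
have: d \in [set a; b] by rewrite e set22.
by do 4!case/set2P=> ?; subst; auto.
Qed.

Lemma adj_parent_edges p r a b : adj (parent_edges p r) a b =
  (a != b) && (((a != r) && (b == p a)) || ((b != r) && (a == p b))).
Proof.
rewrite /adj; have [//|ab /=] := eqVneq a b.
apply/imsetP/idP => [[v]|/orP[/andP[ar /eqP ->]|/andP[br /eqP ->]]].
- by rewrite !inE => vr /eq_set2[[-> ->]|[-> ->]]; rewrite vr eqxx ?orbT.
- by exists a; rewrite // !inE.
- by exists b; rewrite 1?setUC // !inE.
Qed.

Section Rooted.
Variables (r : 'I_N) (p : {ffun 'I_N -> 'I_N}).
Hypothesis rp : rooted r p.

Lemma rooted_periodic v m : iter m.+1 p v = v -> v = r.
Proof.
have [pr reach] := rootedP _ _ rp; move=> pv; have [n pn] := reach v.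
have iter_mul k : iter (k * m.+1) p v = v.
  by elim: k => // k IH; rewrite mulSn iterD IH pv.
by rewrite -(iter_mul n) -(subnK (leq_pmulr n (ltn0Sn m))) iterD pn iter_fix.
Qed.

Lemma rooted_parent_neq v : v != r -> p v != v.
Proof. by apply: contraNneq => pv; apply/eqP/(rooted_periodic (m := 0)). Qed.

Lemma rooted_order_parent v : v != r -> order p (p v) < order p v.
Proof.
move=> vr; case: (orderPcycle p v) => [cyc _|_ -> //].
have /iter_findex : fconnect p (p v) v by rewrite fconnect_f.
by rewrite -iterSr => /rooted_periodic vr'; rewrite vr' eqxx in vr.
Qed.

Lemma parent_edges_simple : simple_graph (parent_edges p r).
Proof.
apply/forallP => e; apply/implyP => /imsetP[v]; rewrite !inE => vr ->.
by rewrite cards2 [v == _]eq_sym rooted_parent_neq.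
Qed.

Lemma parent_edges_connected : connectedb (parent_edges p r).
Proof.
have [_ reach] := rootedP _ _ rp.
have to_root v : connect (adj (parent_edges p r)) v r.
  have [n] := reach v; elim: n v => [|n IH] v; first by move=> <-; apply: connect0.
  rewrite iterSr => /IH; have [->|vr] := eqVneq v r; first by rewrite connect0.
  apply: connect_trans; apply: connect1.
  by rewrite adj_parent_edges vr eqxx /= andbT eq_sym rooted_parent_neq.
apply/forallP => v; apply/forallP => w; apply: connect_trans (to_root v) _.
by rewrite (sym_connect_sym (adj_sym _)) to_root.
Qed.

Lemma parent_edges_acyclic : ~~ has_cycle (parent_edges p r).
Proof.
apply/negP => /existsP[m /existsP[c /and3P[m2 uc cc]]].
have sc : 2 < size c by rewrite size_tuple.
have x0c := mem_nth r (ltnW (ltnW sc)).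
case: (arg_maxnP (order p) x0c) => x xc xmax.
(* a vertex of maximal [order] on the cycle is the parent of both its neighbours *)
have [y [z [yc zc yz xy zx]]] := cycle_neighbours uc cc sc xc.
have below u : u \in c -> u != r -> x = p u -> False.
  by move=> uc' ur xu; have := xmax u uc'; have := rooted_order_parent ur; rewrite -xu; lia.
move: xy zx; rewrite !adj_parent_edges.
case/andP => _ /orP[/andP[_ /eqP yx]|/andP[yr /eqP xy]]; last by case: (below y).
case/andP => _ /orP[/andP[zr /eqP xz]|/andP[_ /eqP zx]]; first by case: (below z).
by rewrite yx zx eqxx in yz.
Qed.

Lemma parent_edges_tree : is_tree (parent_edges p r).
Proof.
by rewrite /is_tree parent_edges_simple parent_edges_connected parent_edges_acyclic.
Qed.

End Rooted.

Lemma parent_edges_inj r p q : rooted r p -> rooted r q ->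
  parent_edges p r = parent_edges q r -> p = q.
Proof.
move=> rp rq pq; have [pr _] := rootedP _ _ rp; have [qr reach] := rootedP _ _ rq.
apply/ffunP => v; have [n] := reach v; elim: n v => [|n IH] v.
  by move=> /= ->; rewrite pr qr.
rewrite iterSr => /IH pqv; have [->|vr] := eqVneq v r; first by rewrite pr qr.
have : [set v; q v] \in parent_edges p r by rewrite pq; apply: imset_f; rewrite !inE.
case/imsetP => u _ /eq_set2[[-> ->]//|[vpu qvu]].
have /(rooted_periodic rq) vr' : iter 2 q v = v by rewrite /= -pqv qvu -vpu.
by rewrite vr' eqxx in vr.
Qed.

Lemma tree_maximal E F : simple_graph E -> ~~ has_cycle E -> F \subset E ->
  connectedb F -> E \subset F.
Proof.
move=> sE aE FE cF; apply/subsetP => e eE.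
have /cards2P[a [b [ab ee]]] : #|e| == 2 by move/forallP: sE => /(_ e); rewrite eE.
subst e; apply/negPn/negP => eF; case/negP: aE.
have /connectP[s0 ps0 lb] : connect (adj F) a b by move/forallP: cF => /(_ a) /forallP.
move: ab eF eE; rewrite lb; case: (shortenP ps0) => s ps us _ ab eF eE.
have hs : size (a :: s) < N.+1.
  by rewrite ltnS -(card_uniqP us); apply: (leq_trans (max_card _)); rewrite card_ord.
apply/existsP; exists (Ordinal hs); apply/existsP; exists (in_tuple (a :: s)).
apply/and3P; split=> //=.
  case: s ps ab eF {us hs eE} => [|y [|z s']] //=; first by rewrite eqxx.
  by rewrite /adj andbT => /andP[_ ->].
rewrite rcons_path (sub_path _ ps) /=; last first.
  by move=> x y /andP[xy xyF]; rewrite /adj xy (subsetP FE).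
by rewrite /adj eq_sym ab setUC eE.
Qed.

Lemma parent_edges_surj r E : is_tree E -> exists2 p, rooted r p & parent_edges p r = E.
Proof.
case/and3P => sE cE aE.
have conn v : connect (adj E) v r by move/forallP: cE => /(_ v) /forallP.
have [p [pr pE reach]] := connect_parent_map conn.
have rp : rooted r p by apply/rootedP.
have sub : parent_edges p r \subset E.
  by apply/subsetP => e /imsetP[v]; rewrite !inE => /pE /andP[_ vpv] ->.
exists p => //; apply/eqP; rewrite eqEsubset sub tree_maximal //.
by case/and3P: (parent_edges_tree rp).
Qed.

Lemma card_trees_rooted r (P : pred {set {set 'I_N}}) :
  #|[set E | is_tree E && P E]| =
  #|[set p in forest_maps [set r] [set~ r] | P (parent_edges p r)]|.
Proof.
rewrite -[RHS](@card_in_imset _ _ (parent_edges^~ r)); last first.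
  by move=> p q /setIdP[rp _] /setIdP[rq _]; apply: parent_edges_inj.
apply: eq_card => E; rewrite inE; apply/andP/imsetP => [[/(parent_edges_surj r)[p rp <-] PE]|].
  by exists p; rewrite // inE; apply/andP.
by case=> p /setIdP[rp Pp] ->; rewrite parent_edges_tree.
Qed.

Lemma small_children_parent_edges r p :
  small_children (parent_edges p r) r = #|children [set~ r] p r :&: [set v : 'I_N | v < r]|.
Proof.
apply: eq_card => v; rewrite !inE adj_parent_edges eqxx /= [r == p v]eq_sym.
by have [->|vr] := eqVneq v r; rewrite ?eqxx // andbA.
Qed.

End RootedTrees.

Lemma card_ord_lt N (r : 'I_N) : #|[set v : 'I_N | v < r]| = r.
Proof.
have rN : (r <= N)%N by apply: ltnW.
have -> : [set v : 'I_N | v < r] = widen_ord rN @: [set: 'I_r].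
  apply/setP => v; rewrite inE; apply/idP/imsetP => [vr|[j _ ->]]; last by rewrite /= ltn_ord.
  by exists (Ordinal vr) => //; apply: val_inj.
rewrite card_imset ?cardsT ?card_ord //.
by move=> a b /(congr1 val) /= /val_inj.
Qed.

Lemma card_trees_small_children N (r : 'I_N) k :
  #|[set E | is_tree E && (small_children E r == k)]| =
  'C(r, k) * \sum_(t < (N.-1 - r).+1) 'C(N.-1 - r, t) * forest_number (k + t) (N.-1 - (k + t)).
Proof.
set L := [set v : 'I_N | v < r]; set H := [set v : 'I_N | r < v].
have dLH : [disjoint L & H] by rewrite -setI_eq0; apply/eqP/setP => v; rewrite !inE; lia.
have LH : [set~ r] = L :|: H by apply/setP => v; rewrite !inE -val_eqE neq_ltn.
have cardW : #|[set~ r]| = N.-1 by rewrite cardsC1 card_ord.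
have cardH : #|H| = N.-1 - r.
  by rewrite -cardW LH cardsU (disjoint_setI0 dLH) cards0 subn0 card_ord_lt addKn.
have drW : [disjoint [set r] & [set~ r]] by rewrite disjoints1 !inE eqxx.
rewrite (card_trees_rooted r (fun E => small_children E r == k)).
have -> : [set p in forest_maps [set r] [set~ r] | small_children (parent_edges p r) r == k] =
    [set p in forest_maps [set r] [set~ r] | #|children [set~ r] p r :&: L| == k].
  by apply/setP => p; rewrite !in_set small_children_parent_edges.
rewrite (card_forest_maps_by_children _ _ _ (fun S => #|S :&: L| == k)).
rewrite (eq_bigr (fun S : {set 'I_N} => forest_number #|S| (N.-1 - #|S|))); last first.
  move=> S /andP[]; rewrite powersetE => SW _.
  rewrite card_forest_maps_children ?set11 // card_forest_maps ?disjoint_cut //.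
  by rewrite (card_cut drW (set11 r) SW) cards1 cardsD (setIidPr SW) cardW.
rewrite LH (sum_powersetU_meet k (fun s => forest_number s (N.-1 - s)) dLH).
by rewrite card_ord_lt cardH.
Qed.

Lemma sum_forest_numberM n r k : (0 < n)%N -> (k <= r <= n)%N ->
  (\sum_(t < (n - r).+1) 'C(n - r, t) * forest_number (k + t) (n - (k + t))) * n =
  (k * n.+1 ^ (n - r) + (n - r) * n.+1 ^ (n - r).-1) * n ^ (r - k).
Proof.
move=> n0 /andP[kr rn]; rewrite -(addn1 n) -sum_bin_shift !big_distrl /=.
apply: eq_bigr => t _; have tn := ltn_ord t.
rewrite -mulnA forest_numberM; [|lia|lia].
by rewrite -!mulnA -expnD; congr (_ * (_ * _ ^ _)); lia.
Qed.

Local Open Scope ring_scope.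

Lemma sum_bin_shift_closed k a x :
  ((k * x.+1 ^ a + a * x.+1 ^ a.-1)%N%:R : rat) =
  (k * x.+1 + a)%N%:R * x.+1%:R ^ (a%:Z - 1).
Proof.
case: a => [|a].
  have x1 : (x.+1%:R : rat) != 0 by rewrite pnatr_eq0.
  by rewrite expn0 muln1 mul0n !addn0 sub0r exprN1 natrM mulfK.
have -> : a.+1%:Z - 1 = a%:Z by lia.
by rewrite -exprnP -natrX -natrM expnS; congr _%:R; ring.
Qed.

Lemma sum_forest_number_closed n i k :
  (0 < n)%N -> (0 < i <= n.+1)%N -> (k <= i.-1)%N ->
  ((\sum_(t < (n - i.-1).+1) 'C(n - i.-1, t) * forest_number (k + t) (n - (k + t)))%:R : rat) =
  ((k.+1 * n.+1)%:Z - i%:Z)%:~R * n%:R ^ (i%:Z - k%:Z - 2) * n.+1%:R ^ (n%:Z - i%:Z).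
Proof.
move=> n0 /andP[i0 iN] ki; have nz : (n%:R : rat) != 0 by rewrite pnatr_eq0 -lt0n.
have kin : (k <= i.-1 <= n)%N by apply/andP; split; lia.
apply: (mulIf nz); rewrite -natrM sum_forest_numberM //.
rewrite natrM sum_bin_shift_closed natrX exprnP.
have -> : n%:R ^ (i.-1 - k)%N = n%:R ^ (i%:Z - k%:Z - 2) * n%:R :> rat.
  by rewrite -[X in _ * X]expr1z -expfzDr //; congr (_ ^ _); lia.
have -> : (k.+1 * n.+1)%:Z - i%:Z = (k * n.+1 + (n - i.-1))%N%:Z by lia.
have -> : (n - i.-1)%N%:Z - 1 = n%:Z - i%:Z by lia.
by rewrite pmulrn; ring.
Qed.

Unset Implicit Arguments.

Theorem mainTheorem4 (n i k : nat) (hn : (1 <= n)%N) (hi1 : (1 <= i)%N)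
    (hi2 : (i <= n.+1)%N) (r : 'I_n.+1) (hr : val r = i.-1) :
  (#|[set E : {set {set 'I_n.+1}} | is_tree E && (small_children E r == k)]|%:R : rat)
  = ('C(i.-1, k))%:R
    * ((k.+1 * n.+1)%:Z - i%:Z)%:~R
    * (n%:R : rat) ^ (i%:Z - k%:Z - 2)
    * (n.+1%:R : rat) ^ (n%:Z - i%:Z).
Proof.
rewrite card_trees_small_children /= hr natrM.
have [ltik|leki] := ltnP i.-1 k; first by rewrite bin_small // !mul0r.
by rewrite sum_forest_number_closed ?hi1 // !mulrA.
Qed.
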